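(* If $G=(V,E)$ is weakly observable and $|V|\ge2$, then for any player algorithm and any time horizon $T$ there exists a sequence of loss functions $\ell_1,\dots,\ell_T:V\to[0,1]$ such that the player's expected regret in the online learning problem with feedback graph $G$ is at least $\tfrac18 T^{2/3}$.
   Context: Let $G=(V,E)$ be a directed graph (self-loops allowed), $N^{\mathrm{in}}(i)=\{j:(j,i)\in E\}$, $N^{\mathrm{out}}(i)=\{j:(i,j)\in E\}$. A vertex $i$ is observable if $N^{\mathrm{in}}(i)\ne\emptyset$; strongly observable if $i\in N^{\mathrm{in}}(i)$ or $V\setminus\{i\}\subseteq N^{\mathrm{in}}(i)$ (or both); $G$ is weakly observable if every vertex is observable but not every vertex is strongly observable. Online learning with feedback graph $G$: the environment fixes in advance losses $\ell_t:V\to[0,1]$; on round $t$ the player chooses (possibly randomly) $I_t\in V$ based on past observations, incurs $\ell_t(I_t)$, and observes only $\{(j,\ell_t(j)):j\in N^{\mathrm{out}}(I_t)\}$. Expected regret: $\mathbb{E}[\sum_{t=1}^T\ell_t(I_t)]-\min_{i\in V}\sum_{t=1}^T\ell_t(i)$. *)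

From HB Require Import structures.
From mathcomp Require Import all_boot all_order all_algebra.
From mathcomp Require Import reals exp.
Set Implicit Arguments. Unset Strict Implicit. Unset Printing Implicit Defensive.
Import Order.TTheory GRing.Theory Num.Theory.
Local Open Scope ring_scope.

Section FeedbackGraph.
Variables (V : finType) (E : rel V).

Definition N_in (i : V) : {set V} := [set j | E j i].
Definition N_out (i : V) : {set V} := [set j | E i j].

Definition observable (i : V) : bool := N_in i != set0.

Definition strongly_observable (i : V) : bool :=
  (i \in N_in i) || ([set: V] :\ i \subset N_in i).

Definition weakly_observable_graph : bool :=
  [forall i, observable i] && ~~ [forall i, strongly_observable i].

Variable R : realType.

Definition observation (l : V -> R) (i : V) : seq (V * R) :=
  [seq (j, l j) | j <- enum V & E i j].

Definition history := seq (V * seq (V * R)).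

(* A (randomized) player algorithm: given the past history, a probability
   distribution over the vertex to play next (behavioral strategy). *)
Definition is_player (alg : history -> V -> R) : Prop :=
  (forall h i, 0 <= alg h i) /\ (forall h, \sum_(i : V) alg h i = 1).

Variable T : nat.
Variable losses : 'I_T -> V -> R.

Definition is_loss_seq : Prop := forall t i, 0 <= losses t i <= 1.

Definition hist_of (a : {ffun 'I_T -> V}) (t : 'I_T) : history :=
  [seq (a s, observation (losses s) (a s)) | s : 'I_T <- enum 'I_T & (s < t)%N].

Definition prob_actions (alg : history -> V -> R) (a : {ffun 'I_T -> V}) : R :=
  \prod_(t < T) alg (hist_of a t) (a t).

Definition expected_loss (alg : history -> V -> R) : R :=
  \sum_(a : {ffun 'I_T -> V}) prob_actions alg a * \sum_(t < T) losses t (a t).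

Definition cumulative_loss (i : V) : R := \sum_(t < T) losses t i.

(* Expected regret against the fixed comparator i; the expected regret is
   the maximum of this quantity over i. *)
Definition regret_against (alg : history -> V -> R) (i : V) : R :=
  expected_loss alg - cumulative_loss i.

End FeedbackGraph.

(* Let [c] be a vertex that is not strongly observable: it does not observe
   itself, and some [b0 <> c] does not observe it either.  Vertex [b0] costs
   1/2, every vertex other than [b0] and [c] costs 1, and [c] costs an i.i.d.
   coin of mean 1/2 - eps (environment +) or 1/2 + eps (environment -).
   The coin of [c] is only revealed in rounds spent on the costly vertices, so
   redrawing it fairly in all other rounds changes nothing the player sees.
   After this change the two environments differ only on revealing rounds,
   and a pointwise Pinsker bound shows that telling them apart costs about
   1/2 per revealing round, while failing to do so costs eps per round in
   one of them.  Summing the two average regrets gives about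
   eps T - O(eps^4 T^2), and eps = T^(-1/3) / 3 yields T^(2/3) / 8 for some
   coin sequence.  For T < 8 a single adversarial first round suffices. *)

From HB Require Import structures.
From mathcomp Require Import all_boot all_order all_algebra perm.
From mathcomp Require Import reals exp.
From mathcomp Require Import ring lra.
Set Implicit Arguments. Unset Strict Implicit. Unset Printing Implicit Defensive.
Import Order.TTheory GRing.Theory Num.Theory.
Local Open Scope ring_scope.

Section SequentialLaw.
Variables (R : realType) (X : finType) (T : nat).
Local Notation traj := {ffun 'I_T -> X}.
Implicit Types (z : traj) (k t s : 'I_T).

Definition fupd z k (x : X) : traj := [ffun t => if t == k then x else z t].

Lemma fupd_at z k x : fupd z k x k = x.
Proof. by rewrite ffunE eqxx. Qed.

Lemma fupd_id z k : fupd z k (z k) = z.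
Proof. by apply/ffunP => t; rewrite ffunE; case: eqP => // ->. Qed.

Lemma fupd_fupd z k x y : fupd (fupd z k y) k x = fupd z k x.
Proof. by apply/ffunP => t; rewrite !ffunE; case: eqP. Qed.

Lemma fupd_other z k x t : t != k -> fupd z k x t = z t.
Proof. by rewrite ffunE => /negbTE ->. Qed.

Lemma fupd_before z k x t : (t < k)%N -> fupd z k x t = z t.
Proof. by move=> htk; rewrite fupd_other // -val_eqE /= neq_ltn htk. Qed.

Variable x0 : X.

(* Summing over trajectories round [k] last: the other rounds are chosen
   first, with [x0] as a placeholder at [k]. *)
Lemma sum_fupd k (Phi : traj -> R) :
  \sum_(z : traj) Phi z = \sum_(z : traj) (z k == x0)%:R * \sum_x Phi (fupd z k x).
Proof.
have sum_at x : \sum_(z : traj) (z k == x0)%:R * Phi (fupd z k x) = \sum_(z : traj) (z k == x)%:R * Phi z.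
  pose sw z := fupd z k (tperm x0 x (z k)).
  have swK : involutive sw by move=> z; rewrite /sw fupd_fupd fupd_at tpermK fupd_id.
  rewrite (reindex_inj (inv_inj swK)); apply: eq_bigr => z _.
  rewrite /sw fupd_at fupd_fupd.
  have -> : (tperm x0 x (z k) == x0) = (z k == x).
    by apply/eqP/eqP => [h|->]; [rewrite -(tpermK x0 x (z k)) h tpermL|exact: tpermR].
  by case: eqP => [<-|]; rewrite ?fupd_id ?mul0r.
symmetry; under eq_bigr do rewrite big_distrr /=.
rewrite exchange_big /=; under eq_bigr do rewrite sum_at.
rewrite exchange_big /=; apply: eq_bigr => z _.
rewrite -big_distrl /= (bigD1 (z k)) //= eqxx big1 ?addr0 ?mul1r // => x.
by rewrite eq_sym => /negbTE ->.
Qed.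

Variable K : 'I_T -> traj -> X -> R.

(* [K t z] is the law of round [t] given the earlier rounds of [z]. *)
Definition adapted := forall t z z',
  (forall s, (s < t)%N -> z s = z' s) -> K t z =1 K t z'.
Definition normalized := forall t z, \sum_x K t z x = 1.
Definition depends_before (k : nat) (G : traj -> R) := forall z z',
  (forall s, (s < k)%N -> z s = z' s) -> G z = G z'.

Definition seq_law z : R := \prod_(t : 'I_T) K t z (z t).

Definition trunc_law (k : nat) z : R :=
  (\prod_(t : 'I_T | (t < k)%N) K t z (z t)) * \prod_(t : 'I_T | (k <= t)%N) (z t == x0)%:R.

Lemma trunc_law0 z : trunc_law 0 z = \prod_(t : 'I_T) (z t == x0)%:R.
Proof. by rewrite /trunc_law big_pred0 // mul1r. Qed.

Lemma trunc_law_full z : trunc_law T z = seq_law z.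
Proof.
rewrite /trunc_law [X in _ * X]big_pred0 => [|t]; last by rewrite leqNgt ltn_ord.
by rewrite mulr1; apply: eq_bigl => t; rewrite ltn_ord.
Qed.

Lemma sum_trunc_law0 : \sum_(z : traj) trunc_law 0 z = 1.
Proof.
under eq_bigr do rewrite trunc_law0.
rewrite -(bigA_distr_bigA (fun t (x : X) => (x == x0)%:R : R)) /=.
apply: big1 => t _; rewrite (bigD1 x0) //= eqxx big1 ?addr0 // => x.
by move/negbTE ->.
Qed.

Lemma prod_ord_ltS k (F : 'I_T -> R) :
  \prod_(t : 'I_T | (t < k.+1)%N) F t = F k * \prod_(t : 'I_T | (t < k)%N) F t.
Proof.
rewrite (bigD1 k) //=; congr (_ * _); apply: eq_bigl => t.
by rewrite ltnS -val_eqE /= ltn_neqAle andbC.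
Qed.

Lemma prod_ord_geS k (F : 'I_T -> R) :
  \prod_(t : 'I_T | (k <= t)%N) F t = F k * \prod_(t : 'I_T | (k.+1 <= t)%N) F t.
Proof.
rewrite (bigD1 k) //=; congr (_ * _); apply: eq_bigl => t.
by rewrite -val_eqE /= ltn_neqAle eq_sym andbC.
Qed.

Hypothesis K_adapted : adapted.

Lemma trunc_law_succ k G :
  \sum_(z : traj) trunc_law k.+1 z * G z = \sum_(z : traj) trunc_law k z * \sum_x K k z x * G (fupd z k x).
Proof.
rewrite (sum_fupd k); apply: eq_bigr => z _.
rewrite !big_distrr; apply: eq_bigr => x _ /=; rewrite !mulrA; congr (_ * _).
rewrite /trunc_law prod_ord_ltS prod_ord_geS fupd_at.
rewrite (K_adapted (z' := z)); last by move=> s; apply: fupd_before.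
have -> : \prod_(t : 'I_T | (t < k)%N) K t (fupd z k x) (fupd z k x t) =
          \prod_(t : 'I_T | (t < k)%N) K t z (z t).
  apply: eq_bigr => t htk; rewrite fupd_before //; apply: K_adapted => s hst.
  by rewrite fupd_before // (ltn_trans hst htk).
have -> : \prod_(t : 'I_T | (k.+1 <= t)%N) (fupd z k x t == x0)%:R =
          \prod_(t : 'I_T | (k.+1 <= t)%N) (z t == x0)%:R :> R.
  by apply: eq_bigr => t hkt; rewrite fupd_other // -val_eqE /= gtn_eqF.
ring.
Qed.

Hypothesis K_normalized : normalized.

Lemma seq_law_trunc (k : nat) G : (k <= T)%N -> depends_before k G ->
  \sum_(z : traj) seq_law z * G z = \sum_(z : traj) trunc_law k z * G z.
Proof.
move=> /subnKC; move: (T - k)%N => n; elim: n k G => [|n IH] k G hkn hG.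
  by rewrite addn0 in hkn; rewrite hkn; apply: eq_bigr => z _; rewrite trunc_law_full.
have hk : (k < T)%N by rewrite -hkn addnS ltnS leq_addr.
rewrite (IH k.+1) ?addSnnS //; last by move=> z z' hz; apply: hG => s /ltnW; apply: hz.
rewrite (trunc_law_succ (Ordinal hk)); apply: eq_bigr => z _ /=; congr (_ * _).
rewrite (eq_bigr (fun x => K (Ordinal hk) z x * G z)); last first.
  by move=> x _; rewrite (hG _ z) // => s hsk; rewrite fupd_before.
by rewrite -big_distrl /= K_normalized mul1r.
Qed.

Lemma seq_law_mass : \sum_(z : traj) seq_law z = 1.
Proof.
rewrite -sum_trunc_law0; transitivity (\sum_(z : traj) seq_law z * 1).
  by apply: eq_bigr => z _; rewrite mulr1.
rewrite (@seq_law_trunc 0 (fun _ => 1) (leq0n T) (fun _ _ _ => erefl)).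
by apply: eq_bigr => z _; rewrite mulr1.
Qed.

Lemma seq_law_round t (psi : X -> R) :
  \sum_(z : traj) seq_law z * psi (z t) = \sum_(z : traj) seq_law z * \sum_x K t z x * psi x.
Proof.
rewrite (seq_law_trunc (ltn_ord t)); last by move=> z z' hz; rewrite hz.
rewrite (seq_law_trunc (ltnW (ltn_ord t))); last first.
  by move=> z z' hz; apply: eq_bigr => x _; rewrite (K_adapted hz).
rewrite trunc_law_succ; apply: eq_bigr => z _; congr (_ * _).
by apply: eq_bigr => x _; rewrite fupd_at.
Qed.

Lemma seq_law_round_eq t (psi1 psi2 : X -> R) :
  (forall z, \sum_x K t z x * psi1 x = \sum_x K t z x * psi2 x) ->
  \sum_(z : traj) seq_law z * psi1 (z t) = \sum_(z : traj) seq_law z * psi2 (z t).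
Proof.
by move=> h; rewrite !seq_law_round; apply: eq_bigr => z _; rewrite h.
Qed.

End SequentialLaw.

Section SequentialLawVia.
Variables (R : realType) (X : finType) (T : nat) (x0 : X) (Y : eqType) (q : X -> Y).
Local Notation traj := {ffun 'I_T -> X}.

(* Both processes only look at the [q]-images of past rounds, and their round
   laws have the same [q]-image: then they agree on [q]-invariant events. *)
Definition adapted_via (K : 'I_T -> traj -> X -> R) := forall (t : 'I_T) (z z' : traj),
  (forall s : 'I_T, (s < t)%N -> q (z s) = q (z' s)) -> K t z =1 K t z'.
Definition invariant_via (G : traj -> R) :=
  forall z z' : traj, (forall s, q (z s) = q (z' s)) -> G z = G z'.

Lemma adapted_via_adapted K : adapted_via K -> adapted K.
Proof. by move=> hK t z z' hz; apply: hK => s hs; rewrite hz. Qed.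

Variables K K' : 'I_T -> traj -> X -> R.
Hypotheses (K_adapted : adapted_via K) (K'_adapted : adapted_via K').
Hypothesis same_image : forall t z (phi : X -> R),
  (forall x x', q x = q x' -> phi x = phi x') ->
  \sum_x K t z x * phi x = \sum_x K' t z x * phi x.

Lemma trunc_law_via (k : nat) G : (k <= T)%N -> invariant_via G ->
  \sum_(z : traj) trunc_law x0 K k z * G z = \sum_(z : traj) trunc_law x0 K' k z * G z.
Proof.
elim: k G => [|k IH] G hk hG; first by apply: eq_bigr => z _; rewrite !trunc_law0.
rewrite (trunc_law_succ x0 (adapted_via_adapted K_adapted) (Ordinal hk)).
rewrite (trunc_law_succ x0 (adapted_via_adapted K'_adapted) (Ordinal hk)) /=.
have fupd_via z x x' : q x = q x' -> forall s, q (fupd z (Ordinal hk) x s) = q (fupd z (Ordinal hk) x' s).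
  by move=> hx s; rewrite !ffunE; case: ifP.
have same z : \sum_x K (Ordinal hk) z x * G (fupd z (Ordinal hk) x) =
              \sum_x K' (Ordinal hk) z x * G (fupd z (Ordinal hk) x).
  by apply: same_image => x x' /(fupd_via z) /hG ->.
under eq_bigr do rewrite same.
apply: IH => [|z z' hz]; first exact: ltnW.
apply: eq_bigr => x _; rewrite (K'_adapted (z' := z')) => [|s _]; last exact: hz.
by congr (_ * _); apply: hG => s; rewrite !ffunE; case: ifP.
Qed.

Lemma seq_law_via G : invariant_via G ->
  \sum_(z : traj) seq_law K z * G z = \sum_(z : traj) seq_law K' z * G z.
Proof.
move=> hG; transitivity (\sum_(z : traj) trunc_law x0 K T z * G z).
  by apply: eq_bigr => z _; rewrite trunc_law_full.
by rewrite trunc_law_via //; apply: eq_bigr => z _; rewrite trunc_law_full.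
Qed.

End SequentialLawVia.

Section LnInequalities.
Variable R : realType.
Implicit Types r p lam : R.

Lemma ln_le_subr1 r : 0 < r -> ln r <= r - 1.
Proof. by move=> r0; have := @le_ln1Dx R (r - 1); rewrite subrKC; apply; lra. Qed.

Lemma subr1_le_mul_ln r : 0 < r -> r - 1 <= r * ln r.
Proof.
move=> r0; have := @ln_le_subr1 r^-1; rewrite invr_gt0 => /(_ r0); rewrite lnV ?posrE // => h.
have : r * - ln r <= r * (r^-1 - 1) by rewrite ler_pM2l.
rewrite mulrBr mulfV ?gt_eqF //; lra.
Qed.

Lemma subr1_mul_ln_ge0 r : 0 < r -> 0 <= (r - 1) * ln r.
Proof.
move=> r0; case: (lerP 1 r) => r1; first by apply: mulr_ge0; [lra|exact: ln_ge0].
by apply: mulr_le0; [lra|apply: ln_le0; lra].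
Qed.

Lemma sqr_subr1_le_ln r : 0 < r -> (r - 1) ^+ 2 <= (r + 1) * ((r - 1) * ln r).
Proof.
move=> r0; have h1 := ln_le_subr1 r0; have h2 := subr1_le_mul_ln r0.
case: (lerP 1 r) => r1.
  have : (r - 1) * (r - 1) <= (r - 1) * (r * ln r) by apply: ler_wpM2l; lra.
  nra.
have : (r - 1) * (r - 1) <= (r - 1) * ln r by rewrite ler_wnM2l //; lra.
nra.
Qed.

(* With [r] the likelihood ratio at a point of mass [p], this bounds the
   total variation by the log-likelihood ratio; it is the pointwise form of
   Pinsker's inequality, with the free parameter [lam] from AM-GM. *)
Lemma abs_sub_le_ln r p lam : 0 <= p -> 0 < r -> 0 < lam ->
  `|p * r - p| <= (lam * (p * r + p) + (p * r - p) * ln r / lam) / 2.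
Proof.
move=> p0 r0 lam0; set m := (r - 1) * ln r.
have m0 : 0 <= m := subr1_mul_ln_ge0 r0.
set u := lam * (r + 1); set v := m / lam.
have u0 : 0 <= u by rewrite /u; apply: mulr_ge0; lra.
have v0 : 0 <= v by rewrite /v divr_ge0 // ltW.
have abs_le : `|r - 1| <= (u + v) / 2.
  have uv : `|r - 1| ^+ 2 <= u * v.
    have -> : u * v = (r + 1) * m by rewrite /u /v; field; lra.
    by rewrite real_normK ?num_real // sqr_subr1_le_ln.
  rewrite -ler_sqr ?nnegrE ?normr_ge0 //; last by apply: divr_ge0; lra.
  by apply: (le_trans uv); have := sqr_ge0 (u - v); rewrite !expr2; lra.
have -> : p * r - p = p * (r - 1) by ring.
rewrite normrM ger0_norm //.
have -> : (p * (r - 1)) * ln r / lam = p * v by rewrite /v /m !mulrA.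
have -> : lam * (p * r + p) = p * u by rewrite /u; ring.
have : p * `|r - 1| <= p * ((u + v) / 2) by rewrite ler_wpM2l.
lra.
Qed.

Lemma ln_prod (I : finType) (F : I -> R) : (forall i, 0 < F i) ->
  ln (\prod_i F i) = \sum_i ln (F i).
Proof.
move=> F0; suff [] : 0 < \prod_i F i /\ ln (\prod_i F i) = \sum_i ln (F i) by [].
apply: (big_rec2 (fun y1 y2 => 0 < y1 /\ ln y1 = y2)); first by rewrite ln1.
by move=> i y1 y2 _ [y10 <-]; rewrite mulr_gt0 // lnM ?posrE.
Qed.

End LnInequalities.

Lemma eq_hist_of (R : realType) (V : finType) (E : rel V) (T : nat)
   (l l' : 'I_T -> V -> R) (a a' : {ffun 'I_T -> V}) (t : 'I_T) :
  (forall s : 'I_T, (s < t)%N -> a s = a' s /\ forall j, E (a s) j -> l s j = l' s j) ->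
  hist_of E l a t = hist_of E l' a' t.
Proof.
move=> h; apply/eq_in_map => s; rewrite mem_filter => /andP[/h[<- hl] _].
by congr (_, _); apply/eq_in_map => j; rewrite mem_filter => /andP[/hl -> _].
Qed.

Section Player.
Variables (R : realType) (V : finType) (E : rel V) (alg : history V R -> V -> R).
Hypothesis halg : is_player alg.
Variable T : nat.

Lemma player_ge0 h v : 0 <= alg h v.
Proof. exact: halg.1. Qed.

Lemma player_sum h : \sum_v alg h v = 1.
Proof. exact: halg.2. Qed.

Lemma player_le1 h u v : u != v -> alg h u + alg h v <= 1.
Proof.
move=> uv; rewrite -(player_sum h) (bigD1 u) //= (bigD1 v) 1?eq_sym //= addrA lerDl.
by apply: sumr_ge0 => w _; exact: player_ge0.
Qed.

Definition play_kernel (l : 'I_T -> V -> R) t (a : {ffun 'I_T -> V}) : V -> R :=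
  alg (hist_of E l a t).

Lemma play_kernel_adapted l : adapted (play_kernel l).
Proof.
move=> t a a' h v; rewrite /play_kernel (@eq_hist_of _ _ _ _ l l a a') // => s hs.
by split => //; apply: h.
Qed.

Lemma play_kernel_normalized l : normalized (play_kernel l).
Proof. by move=> t a; exact: player_sum. Qed.

Lemma prob_actions_mass l (v0 : V) : \sum_(a : {ffun 'I_T -> V}) prob_actions E l alg a = 1.
Proof. exact: (seq_law_mass v0 (play_kernel_adapted l) (play_kernel_normalized l)). Qed.

Lemma regret_againstE l i : regret_against E l alg i =
  \sum_(a : {ffun 'I_T -> V}) prob_actions E l alg a * \sum_(t < T) (l t (a t) - l t i).
Proof.
rewrite /regret_against /expected_loss /cumulative_loss.
under [RHS]eq_bigr do rewrite sumrB mulrBr.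
by rewrite sumrB -big_distrl /= (prob_actions_mass _ i) mul1r.
Qed.

Definition first_round_loss (u : V) : 'I_T -> V -> R :=
  fun t v => if val t == 0%N then (v != u)%:R else 0.

Lemma first_round_loss_ok u : is_loss_seq (first_round_loss u).
Proof.
by move=> t v; rewrite /first_round_loss; case: ifP; case: (v != u); rewrite ?lexx ?ler01.
Qed.

Lemma regret_first_round u : (0 < T)%N ->
  regret_against E (first_round_loss u) alg u = 1 - alg [::] u.
Proof.
move=> T0; set t0 := Ordinal T0; rewrite regret_againstE.
have one_round a : \sum_(t < T) (first_round_loss u t (a t) - first_round_loss u t u) =
    (a t0 != u)%:R.
  rewrite (bigD1 t0) //= big1 ?addr0 => [|t]; first by rewrite /first_round_loss eqxx subr0.
  by rewrite /first_round_loss -val_eqE /= => /negbTE ->; rewrite subr0.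
under eq_bigr do rewrite one_round.
have hist0 a : hist_of E (first_round_loss u) a t0 = [::].
  by rewrite /hist_of (@eq_filter _ _ pred0) ?filter_pred0.
rewrite (@seq_law_round_eq _ _ _ u _ (play_kernel_adapted _) (play_kernel_normalized _) t0
  (fun v => (v != u)%:R) (fun _ => 1 - alg [::] u)).
  by rewrite -big_distrl /= (prob_actions_mass _ u) mul1r.
move=> a; rewrite -big_distrl /= play_kernel_normalized mul1r /play_kernel hist0.
have -> : 1 - alg [::] u = \sum_(v | v != u) alg [::] v.
  by rewrite -(player_sum [::]) (bigD1 u) //= addrAC subrr add0r.
by rewrite (bigD1 u) //= eqxx mulr0 add0r; apply: eq_bigr => v ->; rewrite mulr1.
Qed.

End Player.

Section TwoPointEnvironment.
Variables (R : realType) (V : finType) (E : rel V) (alg : history V R -> V -> R).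
Hypothesis halg : is_player alg.
Variables (c b0 : V).
Hypotheses (nEcc : ~~ E c c) (nEb0c : ~~ E b0 c) (b0c : b0 != c).
Variables (T : nat) (eps : R).
Hypotheses (eps_gt0 : 0 < eps) (eps_lt : 2 * eps < 1).

(* A round is the pair (action played, coin deciding the loss of [c]). *)
Local Notation traj := {ffun 'I_T -> V * bool}.
Local Notation coinseq := {ffun 'I_T -> bool}.
Implicit Types (t : 'I_T) (z : traj) (s : R).

Definition loss_at (x : V * bool) : R :=
  if x.1 == c then x.2%:R else if x.1 == b0 then 2^-1 else 1.
Definition coin_losses (bits : 'I_T -> bool) : 'I_T -> V -> R :=
  fun t v => loss_at (v, bits t).

Definition actions (z : traj) : {ffun 'I_T -> V} := [ffun t => (z t).1].
Definition coins (z : traj) : coinseq := [ffun t => (z t).2].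
Definition traj_hist z t := hist_of E (coin_losses (coins z)) (actions z) t.

(* [coin s true] is the probability that [c] costs 1: [coin 1] favours [c] over
   [b0], [coin (-1)] favours [b0] over [c], and [coin 0] is fair. *)
Definition coin (s : R) (b : bool) : R := if b then 2^-1 - s * eps else 2^-1 + s * eps.
Arguments coin : simpl never.

Definition joint_kernel s t (z : traj) (x : V * bool) : R :=
  alg (traj_hist z t) x.1 * coin s x.2.

(* The coin of a round in which [c] is not observed is redrawn fairly; the
   player cannot tell the difference. *)
Definition observed_kernel s t (z : traj) (x : V * bool) : R :=
  alg (traj_hist z t) x.1 * coin (if E x.1 c then s else 0) x.2.

Definition observed (x : V * bool) := (x.1, E x.1 c && x.2).

Lemma coin_sum s : coin s true + coin s false = 1.
Proof. rewrite /coin; lra. Qed.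

Lemma coin_gt0 s b : `|s| <= 1 -> 0 < coin s b.
Proof.
rewrite ler_norml => /andP[? ?]; have := eps_gt0; have := eps_lt.
by rewrite /coin; case: b; nra.
Qed.

Lemma sum_pair (F : V * bool -> R) :
  \sum_x F x = \sum_v (F (v, true) + F (v, false)).
Proof.
transitivity (\sum_v \sum_b F (v, b)); last by apply: eq_bigr => v _; rewrite big_bool.
by rewrite pair_bigA; apply: eq_bigr => -[].
Qed.

Lemma traj_hist_observed t (z z' : traj) :
  (forall s : 'I_T, (s < t)%N -> observed (z s) = observed (z' s)) ->
  traj_hist z t = traj_hist z' t.
Proof.
move=> h; apply: eq_hist_of => s /h[e1 e2]; rewrite !ffunE e1; split => // j Ej.
rewrite /coin_losses /loss_at /=; case: eqP => [jc|//]; subst j.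
by rewrite !ffunE; move: e2; rewrite e1 Ej /= => ->.
Qed.

Lemma joint_kernel_adapted s : adapted_via observed (joint_kernel s).
Proof. by move=> t z z' h x; rewrite /joint_kernel (traj_hist_observed h). Qed.

Lemma observed_kernel_adapted s : adapted_via observed (observed_kernel s).
Proof. by move=> t z z' h x; rewrite /observed_kernel (traj_hist_observed h). Qed.

Lemma joint_kernel_normalized s : normalized (joint_kernel s).
Proof.
move=> t z; rewrite sum_pair -(player_sum halg (traj_hist z t)).
by apply: eq_bigr => v _; rewrite /joint_kernel -mulrDr coin_sum mulr1.
Qed.

Lemma observed_kernel_normalized s : normalized (observed_kernel s).
Proof.
move=> t z; rewrite sum_pair -(player_sum halg (traj_hist z t)).
by apply: eq_bigr => v _; rewrite /observed_kernel /= -mulrDr coin_sum mulr1.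
Qed.

Lemma joint_observed_same_image s t z (phi : V * bool -> R) :
  (forall x x', observed x = observed x' -> phi x = phi x') ->
  \sum_x joint_kernel s t z x * phi x = \sum_x observed_kernel s t z x * phi x.
Proof.
move=> phi_obs; rewrite !sum_pair; apply: eq_bigr => v _.
rewrite /joint_kernel /observed_kernel /=; case Evc: (E v c) => //.
rewrite (phi_obs (v, true) (v, false)) /observed /= ?Evc //.
by rewrite -!mulrA -!mulrDr -!mulrDl !coin_sum.
Qed.

Definition avg_regret s i : R :=
  \sum_(bits : coinseq) (\prod_t coin s (bits t)) * regret_against E (coin_losses bits) alg i.

Lemma sum_actions_coins (F : {ffun 'I_T -> V} -> coinseq -> R) :
  \sum_(bits : coinseq) \sum_(a : {ffun 'I_T -> V}) F a bits = \sum_z F (actions z) (coins z).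
Proof.
rewrite pair_big /=.
pose zip (p : coinseq * {ffun 'I_T -> V}) : traj := [ffun t => (p.2 t, p.1 t)].
have zipK : cancel (fun z => (coins z, actions z)) zip.
  by move=> z; apply/ffunP => t; rewrite !ffunE; case: (z t).
have unzipK : cancel zip (fun z => (coins z, actions z)).
  by move=> [bits a]; congr (_, _); apply/ffunP => t; rewrite !ffunE.
by rewrite (reindex (fun z => (coins z, actions z))) //; exists zip.
Qed.

Lemma avg_regret_joint s i : avg_regret s i =
  \sum_z seq_law (joint_kernel s) z * \sum_t (loss_at (z t) - loss_at (i, (z t).2)).
Proof.
rewrite /avg_regret; under eq_bigr do rewrite (regret_againstE _ halg) big_distrr /=.
rewrite sum_actions_coins; apply: eq_bigr => z _; rewrite mulrA; congr (_ * _).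
  rewrite /seq_law /prob_actions -big_split /=; apply: eq_bigr => t _.
  by rewrite /joint_kernel /play_kernel /traj_hist !ffunE mulrC.
by apply: eq_bigr => t _; rewrite /coin_losses !ffunE.
Qed.

Definition mean_loss s v : R :=
  if v == c then coin s true else if v == b0 then 2^-1 else 1.

Lemma coin_mix s (y : R) : coin s true * y + coin s false * y = y.
Proof. by rewrite -mulrDl coin_sum mul1r. Qed.

Lemma mean_lossE s v :
  coin s true * loss_at (v, true) + coin s false * loss_at (v, false) = mean_loss s v.
Proof.
rewrite /loss_at /mean_loss /=; case: ifP => _; first by rewrite mulr1 mulr0 addr0.
by rewrite coin_mix.
Qed.

Lemma joint_kernel_mean s t z (f : V * bool -> R) :
  \sum_x joint_kernel s t z x * f x =
  \sum_x joint_kernel s t z x * (coin s true * f (x.1, true) + coin s false * f (x.1, false)).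
Proof.
rewrite !sum_pair; apply: eq_bigr => v _; rewrite /joint_kernel /= -!mulrA -!mulrDr.
by rewrite coin_mix.
Qed.

Lemma joint_round_regret s i t :
  \sum_z seq_law (joint_kernel s) z * (loss_at (z t) - loss_at (i, (z t).2)) =
  \sum_z seq_law (joint_kernel s) z * (mean_loss s (z t).1 - mean_loss s i).
Proof.
apply: (seq_law_round_eq (c, false) (adapted_via_adapted (joint_kernel_adapted s))
  (joint_kernel_normalized s) (psi1 := fun x => loss_at x - loss_at (i, x.2))
  (psi2 := fun x => mean_loss s x.1 - mean_loss s i)) => z.
rewrite joint_kernel_mean; apply: eq_bigr => x _; rewrite -!mean_lossE /=; congr (_ * _).
ring.
Qed.

Lemma avg_regret_mean s i : avg_regret s i =
  \sum_z seq_law (observed_kernel s) z * \sum_t (mean_loss s (z t).1 - mean_loss s i).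
Proof.
rewrite avg_regret_joint; under eq_bigr do rewrite big_distrr /=.
rewrite exchange_big /=; under eq_bigr do rewrite joint_round_regret.
rewrite exchange_big /=; under eq_bigr do rewrite -big_distrr /=.
apply: (seq_law_via (c, false) (joint_kernel_adapted s) (observed_kernel_adapted s)
  (@joint_observed_same_image s)) => z z' h.
by apply: eq_bigr => t _; case: (h t) => ->.
Qed.

Definition count_b0 z : R := \sum_t ((z t).1 == b0)%:R.
Definition count_other z : R := \sum_t (((z t).1 != b0) && ((z t).1 != c))%:R.
Definition count_obs z : R := \sum_t (E (z t).1 c)%:R.

Local Notation P s := (seq_law (observed_kernel s)).

Lemma mean_gap_c v : mean_loss 1 v - mean_loss 1 c =
  eps * (v == b0)%:R + (2^-1 + eps) * ((v != b0) && (v != c))%:R.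
Proof.
have := eps_gt0; rewrite /mean_loss eqxx /coin.
case: (eqVneq v c) => [->|_]; first by rewrite [c == b0]eq_sym (negbTE b0c) /=; lra.
by case: (eqVneq v b0) => _ /=; lra.
Qed.

Lemma mean_gap_b0 v : mean_loss (-1) v - mean_loss (-1) b0 =
  eps * (1 - (v == b0)%:R) + (2^-1 - eps) * ((v != b0) && (v != c))%:R.
Proof.
have := eps_gt0; rewrite /mean_loss [b0 == c](negbTE b0c) eqxx /coin.
case: (eqVneq v c) => [->|_]; first by rewrite [c == b0]eq_sym (negbTE b0c) /=; lra.
by case: (eqVneq v b0) => _ /=; lra.
Qed.

Lemma avg_regret_c : avg_regret 1 c =
  \sum_z P 1 z * (eps * count_b0 z + (2^-1 + eps) * count_other z).
Proof.
rewrite avg_regret_mean; apply: eq_bigr => z _; congr (_ * _).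
rewrite /count_b0 /count_other !mulr_sumr -big_split /=.
by apply: eq_bigr => t _; rewrite mean_gap_c.
Qed.

Lemma avg_regret_b0 : avg_regret (-1) b0 =
  \sum_z P (-1) z * (eps * (T%:R - count_b0 z) + (2^-1 - eps) * count_other z).
Proof.
rewrite avg_regret_mean; apply: eq_bigr => z _; congr (_ * _).
rewrite -[T in T%:R]card_ord -sumr_const /count_b0 /count_other -sumrB.
rewrite !mulr_sumr -big_split /=.
by apply: eq_bigr => t _; rewrite mean_gap_b0.
Qed.

Local Notation expect s f := (\sum_(z : traj) P s z * f z).

Lemma P_ge0 s z : `|s| <= 1 -> 0 <= P s z.
Proof.
move=> s1; apply: prodr_ge0 => t _; apply: mulr_ge0; first exact: player_ge0.
by apply/ltW/coin_gt0; case: ifP; rewrite ?normr0.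
Qed.

Lemma P_mass s : \sum_z P s z = 1.
Proof.
exact: (seq_law_mass (c, false) (adapted_via_adapted (observed_kernel_adapted s))
  (observed_kernel_normalized s)).
Qed.

Lemma expect_lin s u a b f g :
  \sum_z P s z * (u + a * f z + b * g z) = u + a * expect s f + b * expect s g.
Proof.
transitivity (\sum_z (u * P s z + a * (P s z * f z) + b * (P s z * g z))).
  by apply: eq_bigr => z _; ring.
by rewrite !big_split /= -mulr_sumr P_mass mulr1 -!mulr_sumr.
Qed.

Definition lr (x : V * bool) : R := if E x.1 c then coin (-1) x.2 / coin 1 x.2 else 1.
Definition llr z : R := \sum_t ln (lr (z t)).
Definition llr_step : R := ln (coin (-1) true / coin 1 true).

Lemma coin1_gt0 b : 0 < coin 1 b.
Proof. by apply: coin_gt0; rewrite normr1. Qed.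

Lemma coinN1_gt0 b : 0 < coin (-1) b.
Proof. by apply: coin_gt0; rewrite normrN1. Qed.

Lemma lr_gt0 x : 0 < lr x.
Proof. by rewrite /lr; case: ifP => // _; rewrite divr_gt0 ?coin1_gt0 ?coinN1_gt0. Qed.

Lemma law_ratio z : P (-1) z = P 1 z * \prod_t lr (z t).
Proof.
rewrite /seq_law -big_split; apply: eq_bigr => t _ /=.
rewrite /observed_kernel /lr; case: ifP => _; last by rewrite mulr1.
by rewrite -mulrA [coin 1 _ * _]mulrC divfK ?gt_eqF ?coin1_gt0.
Qed.

Lemma llr_step_neg : ln (coin (-1) false / coin 1 false) = - llr_step.
Proof.
have -> : coin (-1) false / coin 1 false = (coin (-1) true / coin 1 true)^-1.
  by rewrite invf_div /coin; congr (_ / _); ring.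
by rewrite lnV // posrE divr_gt0 ?coin1_gt0 ?coinN1_gt0.
Qed.

Lemma expect_llr s :
  expect s llr = (coin s true - coin s false) * llr_step * expect s count_obs.
Proof.
set k := (coin s true - coin s false) * llr_step.
transitivity (\sum_t \sum_z P s z * ln (lr (z t))).
  by rewrite exchange_big; apply: eq_bigr => z _; rewrite /llr big_distrr.
transitivity (\sum_t \sum_z P s z * (k * (E (z t).1 c)%:R)); last first.
  rewrite exchange_big mulr_sumr; apply: eq_bigr => z _.
  by rewrite mulrCA /count_obs !big_distrr.
apply: eq_bigr => t _.
apply: (seq_law_round_eq (c, false) (adapted_via_adapted (observed_kernel_adapted s))
  (observed_kernel_normalized s) (psi1 := fun x => ln (lr x))
  (psi2 := fun x => k * (E x.1 c)%:R)) => z.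
rewrite !sum_pair; apply: eq_bigr => v _; rewrite /observed_kernel /lr /k /=.
by case: (E v c); rewrite /= ?ln1 ?llr_step_neg -/llr_step -!mulrA -!mulrDr ?coin_mix; ring.
Qed.

Lemma llr_step_ge0 : 0 <= llr_step.
Proof.
rewrite /llr_step ln_ge0 // ler_pdivlMr ?coin1_gt0 // mul1r /coin.
by have := eps_gt0; lra.
Qed.

Lemma llr_step_le : llr_step <= 4 * eps / (1 - 2 * eps).
Proof.
have -> : 4 * eps / (1 - 2 * eps) = coin (-1) true / coin 1 true - 1.
  by rewrite /coin; field; apply: lt0r_neq0; have := eps_lt; lra.
exact/ln_le_subr1/divr_gt0/coin1_gt0/coinN1_gt0.
Qed.

Lemma tv_le_llr lam : 0 < lam ->
  \sum_z `|P (-1) z - P 1 z| <= lam + (expect (-1) llr - expect 1 llr) / (2 * lam).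
Proof.
move=> lam0.
have pointwise z : `|P (-1) z - P 1 z| <=
    (lam * (P (-1) z + P 1 z) + (P (-1) z - P 1 z) * llr z / lam) / 2.
  rewrite law_ratio /llr -ln_prod => [|t]; last exact: lr_gt0.
  apply: abs_sub_le_ln lam0; first by rewrite P_ge0 ?normr1.
  by apply: prodr_gt0 => t _; exact: lr_gt0.
apply: le_trans (ler_sum _ (fun z _ => pointwise z)) _.
rewrite -mulr_suml big_split /= -mulr_sumr -mulr_suml big_split /= !P_mass.
under eq_bigr do rewrite mulrBl.
by rewrite sumrB le_eqVlt; apply/orP; left; apply/eqP; field; exact: lt0r_neq0.
Qed.

Lemma count_b0_shift :
  expect (-1) count_b0 - expect 1 count_b0 <= T%:R / 2 * \sum_z `|P (-1) z - P 1 z|.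
Proof.
have -> : expect (-1) count_b0 - expect 1 count_b0 =
    \sum_z (P (-1) z - P 1 z) * (count_b0 z - T%:R / 2).
  under [RHS]eq_bigr do rewrite mulrBr mulrBl mulrBl.
  by rewrite !sumrB -!mulr_suml !P_mass subrr subr0 -sumrB.
rewrite mulr_sumr; apply: ler_sum => z _.
apply: le_trans (ler_norm _) _; rewrite normrM mulrC ler_wpM2r //.
have count_ge0 : 0 <= count_b0 z by apply: sumr_ge0 => t _; apply: ler0n.
have count_le : count_b0 z <= T%:R.
  rewrite -[T in T%:R]card_ord -sumr_const; apply: ler_sum => t _.
  by case: (_ == _).
by rewrite ler_norml; apply/andP; split; lra.
Qed.

Lemma count_obs_le_other z : count_obs z <= count_other z.
Proof.
apply: ler_sum => t _; case Ec: (E (z t).1 c); last exact: ler0n.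
suff [-> ->] : (z t).1 != b0 /\ (z t).1 != c by [].
by split; apply: contraTneq Ec => ->; rewrite ?(negbTE nEb0c) ?(negbTE nEcc).
Qed.

Lemma llr_gap_le : expect (-1) llr - expect 1 llr <=
  8 * eps ^+ 2 / (1 - 2 * eps) * (expect 1 count_other + expect (-1) count_other).
Proof.
move: (eps_gt0) (eps_lt) => eps0 eps_half.
have obs_le s : `|s| <= 1 -> expect s count_obs <= expect s count_other.
  move=> s1; apply: ler_sum => z _; apply: ler_wpM2l; [exact: P_ge0|exact: count_obs_le_other].
have obs_ge0 s : `|s| <= 1 -> 0 <= expect s count_obs.
  move=> s1; apply: sumr_ge0 => z _; apply: mulr_ge0; first exact: P_ge0.
  by apply: sumr_ge0 => t _; apply: ler0n.
have N1 : `|1 : R| <= 1 by rewrite normr1.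
have NN1 : `|-1 : R| <= 1 by rewrite normrN1.
have coin_diff s : coin s true - coin s false = - (2 * s * eps) by rewrite /coin; ring.
rewrite !expect_llr !coin_diff.
have -> : 8 * eps ^+ 2 / (1 - 2 * eps) = 2 * eps * (4 * eps / (1 - 2 * eps)).
  by field; apply: lt0r_neq0; lra.
have -> : forall L A B : R, - (2 * -1 * eps) * L * A - - (2 * 1 * eps) * L * B =
    2 * eps * (L * (B + A)) by move=> L A B; ring.
rewrite -[in X in _ <= X]mulrA; apply: ler_wpM2l; first lra.
apply: le_trans (ler_wpM2l llr_step_ge0 (lerD (obs_le 1 N1) (obs_le (-1) NN1))) _.
rewrite ler_wpM2r ?llr_step_le //.
have other_ge0 s : `|s| <= 1 -> 0 <= expect s count_other.
  by move=> s1; exact: le_trans (obs_ge0 s s1) (obs_le s s1).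
by rewrite addr_ge0 ?other_ge0.
Qed.

Lemma avg_regret_sum_ge : (0 < T)%N ->
  eps * T%:R - eps * T%:R * (4 * eps ^+ 3 * T%:R / (1 - 2 * eps) ^+ 2) / 2 <=
  avg_regret 1 c + avg_regret (-1) b0.
Proof.
move=> T0; move: (eps_gt0) (eps_lt) => eps0 eps_half.
set lam := 4 * eps ^+ 3 * T%:R / (1 - 2 * eps) ^+ 2.
have T_gt0 : 0 < T%:R :> R by rewrite ltr0n.
have eps_lt1 : 0 < 1 - 2 * eps by lra.
have lam_gt0 : 0 < lam by rewrite /lam divr_gt0 ?exprn_gt0 // !mulr_gt0 ?exprn_gt0 ?ltr0n.
have -> : avg_regret 1 c = 0 + eps * expect 1 count_b0 + (2^-1 + eps) * expect 1 count_other.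
  by rewrite avg_regret_c -expect_lin; apply: eq_bigr => z _; congr (_ * _); ring.
have -> : avg_regret (-1) b0 =
    eps * T%:R + - eps * expect (-1) count_b0 + (2^-1 - eps) * expect (-1) count_other.
  by rewrite avg_regret_b0 -expect_lin; apply: eq_bigr => z _; congr (_ * _); ring.
set kap := 8 * eps ^+ 2 / (1 - 2 * eps).
set A1 := expect 1 count_b0; set A2 := expect (-1) count_b0.
set N1 := expect 1 count_other; set N2 := expect (-1) count_other.
have N1_ge0 : 0 <= N1.
  apply: sumr_ge0 => z _; rewrite mulr_ge0 ?P_ge0 ?normr1 //.
  by apply: sumr_ge0 => t _; apply: ler0n.
have tv : \sum_z `|P (-1) z - P 1 z| <= lam + kap * (N1 + N2) / (2 * lam).
  apply: le_trans (tv_le_llr lam_gt0) _; rewrite lerD2l ler_wpM2r ?llr_gap_le //.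
  by rewrite invr_ge0; lra.
have shift : eps * (A2 - A1) <= eps * (T%:R / 2 * (lam + kap * (N1 + N2) / (2 * lam))).
  apply: ler_wpM2l; first lra.
  by apply: le_trans count_b0_shift _; apply: ler_wpM2l => //; lra.
(* [lam] is tuned so that the cost of telling the two laws apart is paid
   exactly by the regret of the rounds counted by [count_other]. *)
have balance : eps * (T%:R / 2 * (lam + kap * (N1 + N2) / (2 * lam))) =
    eps * T%:R * lam / 2 + (2^-1 - eps) * (N1 + N2).
  by rewrite /kap /lam; field; rewrite !lt0r_neq0 //; lra.
rewrite balance in shift.
have : 0 <= eps * N1 by rewrite mulr_ge0 //; lra.
lra.
Qed.

Lemma coin_losses_ok bits : is_loss_seq (coin_losses bits).
Proof.
move=> t v; rewrite /coin_losses /loss_at /=.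
by case: ifP => _; [case: (bits t)|case: ifP => _]; rewrite ?ler01 ?lexx //; lra.
Qed.

Lemma avg_regret_le s i B : `|s| <= 1 ->
  (forall bits : coinseq, regret_against E (coin_losses bits) alg i <= B) -> avg_regret s i <= B.
Proof.
move=> s1 regret_le.
apply: le_trans (_ : _ <= \sum_(bits : coinseq) (\prod_t coin s (bits t)) * B) _.
  apply: ler_sum => bits _; apply: ler_wpM2l => //.
  by apply: prodr_ge0 => t _; apply/ltW/coin_gt0.
rewrite -mulr_suml -(bigA_distr_bigA (fun t b => coin s b)) /= big1 ?mul1r // => t _.
by rewrite big_bool /= coin_sum.
Qed.

Lemma exists_regret_gt s i B : `|s| <= 1 -> B < avg_regret s i ->
  exists bits : coinseq, B <= regret_against E (coin_losses bits) alg i.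
Proof.
rewrite ltNge => s1 avg_gt.
have /existsP[bits] : [exists bits : coinseq, B <= regret_against E (coin_losses bits) alg i].
  apply: contraR avg_gt; rewrite negb_exists => /forallP regret_lt.
  by apply: avg_regret_le => // bits; apply/ltW; rewrite ltNge regret_lt.
by exists bits.
Qed.

End TwoPointEnvironment.

Section Tuning.
Variable R : realType.

Lemma powR_inv3K (x : R) : 0 <= x -> (x `^ 3^-1) ^+ 3 = x.
Proof.
by move=> x0; rewrite -powR_mulrn ?powR_ge0 // -powRrM mulVf ?powRr1 // pnatr_eq0.
Qed.

Lemma powR_two_thirds (x : R) : x `^ (2 / 3) = (x `^ 3^-1) ^+ 2.
Proof. by rewrite -powR_mulrn ?powR_ge0 // -powRrM mulrC. Qed.

(* The choice [eps = 1 / (3 y)], [T = y^3] makes the bound of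
   [avg_regret_sum_ge] at least [5 y^2 / 18], above [2 * y^2 / 8]. *)
Lemma tuned_bound_gt (y : R) : 2 <= y ->
  2 * (y ^+ 2 / 8) < (3 * y)^-1 * y ^+ 3 -
    (3 * y)^-1 * y ^+ 3 * (4 * (3 * y)^-1 ^+ 3 * y ^+ 3 / (1 - 2 * (3 * y)^-1) ^+ 2) / 2.
Proof.
move=> y2; have y0 : 0 < y by lra.
set eps := (3 * y)^-1.
have eps_y3 : eps * y ^+ 3 = y ^+ 2 / 3 by rewrite /eps; field; lra.
have eps3_y3 : 4 * eps ^+ 3 * y ^+ 3 = 4 / 27 by rewrite /eps; field; lra.
have eps_le : eps <= 6^-1 by rewrite /eps lef_pV2 ?posrE; lra.
have eps_gt0 : 0 < eps by rewrite /eps invr_gt0; lra.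
have sqr_ge : 4 / 9 <= (1 - 2 * eps) ^+ 2 by rewrite expr2; nra.
have lam_le : 4 * eps ^+ 3 * y ^+ 3 / (1 - 2 * eps) ^+ 2 <= 3^-1.
  by rewrite eps3_y3 ler_pdivrMr; lra.
rewrite eps_y3.
have y2_gt0 : 0 < y ^+ 2 by apply: exprn_gt0.
have : y ^+ 2 / 3 * (4 * eps ^+ 3 * y ^+ 3 / (1 - 2 * eps) ^+ 2) <= y ^+ 2 / 3 * 3^-1.
  by rewrite ler_wpM2l //; lra.
lra.
Qed.

End Tuning.

Lemma weakly_observable_witness (V : finType) (E : rel V) : weakly_observable_graph E ->
  exists c b0, [/\ ~~ E c c, ~~ E b0 c & b0 != c].
Proof.
case/andP=> _; rewrite negb_forall => /existsP[c].
rewrite /strongly_observable negb_or /N_in inE => /andP[nEcc /subsetPn[b0]].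
by rewrite in_setD1 inE => /andP[b0c _] nEb0c; exists c, b0.
Qed.

Section LowerBounds.
Variables (R : realType) (V : finType) (E : rel V) (alg : history V R -> V -> R).
Hypothesis halg : is_player alg.
Variable T : nat.

Lemma small_horizon_lower_bound (u v : V) : u != v -> (T < 8)%N ->
  exists losses : 'I_T -> V -> R, is_loss_seq losses /\
    exists i, regret_against E losses alg i >= T%:R `^ (2 / 3) / 8.
Proof.
move=> uv T8; set y := (T%:R : R) `^ 3^-1.
have y3 : y ^+ 3 = T%:R by rewrite powR_inv3K.
have y0 : 0 <= y by exact: powR_ge0.
have bound_le : T%:R `^ (2 / 3) / 8 <= 2^-1 :> R.
  have : y ^+ 3 <= 7 by rewrite y3 (ler_nat R T 7) -ltnS.
  by rewrite powR_two_thirds -/y; nra.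
have [w w_le] : exists w, alg [::] w <= 2^-1.
  have := player_le1 halg [::] uv.
  by case: (lerP (alg [::] u) 2^-1) => [|?] ?; [exists u|exists v; lra].
exists (@first_round_loss R V T w); split; first exact: first_round_loss_ok.
exists w; case: (posnP T) => [T0|T_gt0]; last first.
  by rewrite (regret_first_round _ halg) //; lra.
rewrite (regret_againstE _ halg) big1 => [|a _]; last first.
  by rewrite big1 ?mulr0 // => t; move: (ltn_ord t); rewrite {2}T0.
have -> : T%:R = 0 :> R by rewrite T0.
by rewrite powR0 ?mul0r // mulf_neq0 ?invr_eq0 ?pnatr_eq0.
Qed.

Lemma large_horizon_lower_bound (c b0 : V) :
  ~~ E c c -> ~~ E b0 c -> b0 != c -> (8 <= T)%N ->
  exists losses : 'I_T -> V -> R, is_loss_seq losses /\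
    exists i, regret_against E losses alg i >= T%:R `^ (2 / 3) / 8.
Proof.
move=> nEcc nEb0c b0c T8; set y := (T%:R : R) `^ 3^-1.
have y3 : y ^+ 3 = T%:R by rewrite powR_inv3K.
have y2 : 2 <= y.
  have : 8 <= y ^+ 3 by rewrite y3 (ler_nat R 8 T).
  by have := powR_ge0 (T%:R : R) 3^-1; rewrite -/y; nra.
set eps := (3 * y)^-1.
have eps_gt0 : 0 < eps by rewrite /eps invr_gt0; lra.
have eps_lt : 2 * eps < 1.
  have y3_gt0 : 0 < 3 * y by lra.
  by rewrite /eps ltr_pdivrMr //; lra.
have := avg_regret_sum_ge halg nEcc nEb0c b0c eps_gt0 eps_lt (leq_trans (ltn0Sn 7) T8).
have := tuned_bound_gt y2; rewrite -/eps y3 => bound_lt sum_ge.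
rewrite powR_two_thirds -/y; set B := y ^+ 2 / 8 in bound_lt *.
have norm1 : `|1 : R| <= 1 by rewrite normr1.
have normN1 : `|-1 : R| <= 1 by rewrite normrN1.
case: (ltrP B (avg_regret E alg c b0 T eps 1 c)) => [avg_c|avg_c].
  have [bits ?] := exists_regret_gt eps_gt0 eps_lt norm1 avg_c.
  by exists (coin_losses R c b0 bits); split; [exact: coin_losses_ok|exists c].
have avg_b0 : B < avg_regret E alg c b0 T eps (-1) b0 by lra.
have [bits ?] := exists_regret_gt eps_gt0 eps_lt normN1 avg_b0.
by exists (coin_losses R c b0 bits); split; [exact: coin_losses_ok|exists b0].
Qed.

End LowerBounds.

Theorem theorem11 (R : realType) (V : finType) (E : rel V)
    (hweak : weakly_observable_graph E) (hV : (2 <= #|V|)%N)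
    (alg : history V R -> V -> R) (halg : is_player alg) (T : nat) :
  exists losses : 'I_T -> V -> R,
    is_loss_seq losses /\
    exists i : V,
      regret_against E losses alg i >= (T%:R `^ (2 / 3)) / 8.
Proof.
(* [hV] follows from [hweak]: a vertex that is not strongly observable is
   missed by some other vertex. *)
have [c [b0 [nEcc nEb0c b0c]]] := weakly_observable_witness hweak.
case: (ltnP T 8) => T8; first exact: (small_horizon_lower_bound E halg b0c T8).
exact: (large_horizon_lower_bound halg nEcc nEb0c b0c T8).
Qed.
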